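(* Let $g=\frac{\sqrt5-1}2$, $g\le\alpha<\beta\le1$, and $(x,y)\in\Omega_\alpha$ with $y<1-\frac1{\sqrt2}$. Then $S(x,y)\cap\Omega_\beta\ne\emptyset$.
   Context: For $\alpha\in[\tfrac12,1]$: $T_\alpha(x)=\frac1x-\lfloor\frac1x+1-\alpha\rfloor$ on $[\alpha-1,\alpha)\setminus\{0\}$, $T_\alpha(0)=0$; $\mathcal T_\alpha(x,y)=\left(T_\alpha(x),\frac{1}{y+\lfloor\frac1x+1-\alpha\rfloor}\right)$ for $x\ne0$, $\mathcal T_\alpha(0,y)=(0,0)$; $\Omega_\alpha=\bigcup_{n\ge0}\overline{\mathcal T_\alpha^n([\alpha-1,\alpha)\times\{0\})}$. For a point $(x,y)$, $S(x,y)=\{(x,y),(-x,-y),(x+1,\frac{y}{1-y}),(1-x,\frac{-y}{y+1})\}$. *)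

From Stdlib Require Import Reals.
Open Scope R_scope.

(* floor on R: Int_part r = up r - 1 is the usual floor *)
Definition Rfloor (r : R) : R := IZR (Int_part r).

Definition digit (alpha x : R) : R := Rfloor (/ x + 1 - alpha).

(* T_alpha, totalised (only used on [alpha-1, alpha)) *)
Definition T (alpha x : R) : R :=
  if Req_EM_T x 0 then 0 else / x - digit alpha x.

Definition calT (alpha : R) (p : R * R) : R * R :=
  if Req_EM_T (fst p) 0 then (0, 0)
  else (T alpha (fst p), / (snd p + digit alpha (fst p))).

Definition img (alpha : R) (n : nat) (p : R * R) : Prop :=
  exists x, alpha - 1 <= x < alpha /\ Nat.iter n (calT alpha) (x, 0) = p.

Definition closure (A : R * R -> Prop) (p : R * R) : Prop :=
  forall eps, 0 < eps -> exists q, A q /\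
    Rabs (fst p - fst q) < eps /\ Rabs (snd p - snd q) < eps.

Definition Omega (alpha : R) (p : R * R) : Prop :=
  exists n : nat, closure (img alpha n) p.

Definition Sset (x y : R) (q : R * R) : Prop :=
  q = (x, y) \/ q = (- x, - y) \/ q = (x + 1, y / (1 - y)) \/
  q = (1 - x, - y / (y + 1)).

From Stdlib Require Import Reals Lra Lia Psatz Classical.
Open Scope R_scope.

(* Run the alpha-orbit of a point (x0, 0) alongside beta-orbits.  Since 0 < beta - alpha < 1
   and 1 < alpha + beta <= 2, the alpha- and beta-digits of corresponding points differ by at
   most one (or two), and the four maps in S(x, y) absorb exactly that difference: if some
   point of S(p) lies on the beta-orbit of [beta - 1, beta) x {0}, then one or two beta-steps
   later some point of S(T_alpha p) does.  The one exception (the fourth map with a beta-digit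
   >= 2) needs two alpha-steps, and then the intermediate point has y >= 1 - 1/sqrt 2; this is
   the source of the hypothesis on y.  All denominators stay away from 0 and +-1 because the
   alpha-orbit never leaves an explicit invariant region, whose invariance is where
   alpha >= (sqrt 5 - 1) / 2 enters.  Finally S is continuous at points with |y| < 1, and
   finitely many beta-images are involved, so the statement passes to the closure. *)

Lemma Rfloor_bounds (r : R) : Rfloor r <= r < Rfloor r + 1.
Proof. unfold Rfloor. destruct (base_Int_part r). lra. Qed.

Lemma Rfloor_ge (r : R) (k : Z) : IZR k <= r -> IZR k <= Rfloor r.
Proof.
  intros Hk. pose proof (Rfloor_bounds r) as Hr. unfold Rfloor in *.
  assert (Hlt : IZR (k - 1) < IZR (Int_part r)) by (rewrite minus_IZR; lra).
  apply lt_IZR in Hlt. apply IZR_le. lia.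
Qed.

Lemma Rfloor_le (r : R) (k : Z) : r < IZR k + 1 -> Rfloor r <= IZR k.
Proof.
  intros Hk. pose proof (Rfloor_bounds r) as Hr. unfold Rfloor in *.
  assert (Hlt : IZR (Int_part r) < IZR (k + 1)) by (rewrite plus_IZR; lra).
  apply lt_IZR in Hlt. apply IZR_le. lia.
Qed.

Lemma Rfloor_gt (r : R) (k : Z) : IZR k - 1 < Rfloor r -> IZR k <= Rfloor r.
Proof.
  intros Hk. unfold Rfloor in *.
  assert (Hlt : IZR (k - 1) < IZR (Int_part r)) by (rewrite minus_IZR; lra).
  apply lt_IZR in Hlt. apply IZR_le. lia.
Qed.

Lemma Rfloor_eq (r : R) (k : Z) : IZR k <= r < IZR k + 1 -> Rfloor r = IZR k.
Proof.
  intros Hk. apply Rle_antisym; [apply Rfloor_le | apply Rfloor_ge]; lra.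
Qed.

Lemma Rfloor_cases (s : R) (k : Z) :
  IZR k - 1 < s < IZR k + 1 -> Rfloor s = IZR k \/ Rfloor s = IZR k - 1.
Proof.
  intros Hs. pose proof (Rfloor_bounds s) as Hf. unfold Rfloor in *.
  assert (H1 : IZR (k - 2) < IZR (Int_part s)) by (rewrite minus_IZR; lra).
  assert (H2 : IZR (Int_part s) < IZR (k + 1)) by (rewrite plus_IZR; lra).
  apply lt_IZR in H1. apply lt_IZR in H2.
  assert (Int_part s = k \/ Int_part s = (k - 1)%Z) as [-> | ->] by lia.
  - now left.
  - right. apply minus_IZR.
Qed.

Lemma Rfloor_plus_1 (r : R) : Rfloor (r + 1) = Rfloor r + 1.
Proof.
  pose proof (Rfloor_bounds r) as Hr. unfold Rfloor in Hr |- *.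
  rewrite <- plus_IZR. apply Rfloor_eq. rewrite plus_IZR. lra.
Qed.

Lemma digit_IZR (a x : R) : digit a x = IZR (Int_part (/ x + 1 - a)).
Proof. reflexivity. Qed.

Lemma digit_bounds (a x : R) : digit a x <= / x + 1 - a < digit a x + 1.
Proof. apply Rfloor_bounds. Qed.

Lemma calT_eq (a x y : R) : x <> 0 ->
  calT a (x, y) = (/ x - digit a x, / (y + digit a x)).
Proof. intros Hx. unfold calT, T; simpl. now destruct (Req_EM_T x 0). Qed.

Lemma calT_zero (a y : R) : calT a (0, y) = (0, 0).
Proof. unfold calT; simpl. now destruct (Req_EM_T 0 0). Qed.

Lemma T_range (a x : R) : a - 1 <= / x - digit a x < a.
Proof. pose proof (digit_bounds a x). lra. Qed.

Lemma calT_fst_range (a : R) (p : R * R) : 0 < a <= 1 -> a - 1 <= fst (calT a p) < a.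
Proof.
  intros Ha. destruct p as [x y]. destruct (Req_EM_T x 0) as [-> | Hx].
  - rewrite calT_zero. simpl. lra.
  - rewrite calT_eq by exact Hx. apply T_range.
Qed.

Lemma img_succ (a : R) (n : nat) (p : R * R) : img a n p -> img a (S n) (calT a p).
Proof. intros [x [Hx E]]. exists x. split; [exact Hx|]. simpl. now rewrite E. Qed.

Lemma img_succ_inv (a : R) (n : nat) (p : R * R) :
  img a (S n) p -> exists p0, img a n p0 /\ p = calT a p0.
Proof. intros [x [Hx E]]. exists (Nat.iter n (calT a) (x, 0)). now split; [exists x|]. Qed.

Lemma img_fst_range (a : R) (n : nat) (p : R * R) :
  0 < a <= 1 -> img a n p -> a - 1 <= fst p < a.
Proof.
  intros Ha Hp. destruct n as [|n].
  - destruct Hp as [x [Hx <-]]. exact Hx.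
  - destruct (img_succ_inv a n p Hp) as [p0 [_ ->]]. now apply calT_fst_range.
Qed.

Lemma img_origin (a : R) : 0 < a <= 1 -> img a 0 (0, 0).
Proof. intros Ha. exists 0. split; [lra | reflexivity]. Qed.

Lemma sqrt2_sq : sqrt 2 * sqrt 2 = 2.
Proof. apply sqrt_sqrt. lra. Qed.

Lemma sqrt2_bounds : 1.414 < sqrt 2 < 1.415.
Proof. pose proof sqrt2_sq. pose proof (sqrt_pos 2). split; nra. Qed.

Lemma inv_sqrt2 : 1 / sqrt 2 = sqrt 2 / 2.
Proof. pose proof sqrt2_sq. pose proof sqrt2_bounds. field_simplify_eq; nra. Qed.

Lemma closure_mono (A B : R * R -> Prop) (p : R * R) :
  (forall q, A q -> B q) -> closure A p -> closure B p.
Proof.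
  intros HAB HA e He. destruct (HA e He) as [q [Hq Hd]]. exists q. auto.
Qed.

Lemma not_closure (A : R * R -> Prop) (p : R * R) : ~ closure A p ->
  exists e, 0 < e /\ forall q, A q ->
    Rabs (fst p - fst q) < e -> Rabs (snd p - snd q) < e -> False.
Proof.
  intros Hn. apply not_all_ex_not in Hn as [e He]. apply imply_to_and in He as [He Hno].
  exists e. split; [exact He|]. intros q Hq H1 H2. apply Hno. now exists q.
Qed.

Lemma closure_union (A B : R * R -> Prop) (p : R * R) :
  closure (fun q => A q \/ B q) p -> closure A p \/ closure B p.
Proof.
  intros H. apply NNPP. intros Hn. apply not_or_and in Hn as [HA HB].
  apply not_closure in HA as [eA [HeA HA]]. apply not_closure in HB as [eB [HeB HB]].
  pose proof (Rmin_l eA eB). pose proof (Rmin_r eA eB).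
  destruct (H (Rmin eA eB) (Rmin_pos _ _ HeA HeB)) as [q [[Hq | Hq] [Hd1 Hd2]]].
  - apply (HA q Hq); lra.
  - apply (HB q Hq); lra.
Qed.

Lemma closure_union_upto (A : nat -> R * R -> Prop) (N : nat) (p : R * R) :
  closure (fun q => exists m, (m <= N)%nat /\ A m q) p ->
  exists m, (m <= N)%nat /\ closure (A m) p.
Proof.
  revert p. induction N as [|N IH]; intros p H.
  - exists 0%nat. split; [lia|]. eapply closure_mono; [| exact H].
    intros q [m [Hm Hq]]. now replace 0%nat with m by lia.
  - assert (H' : closure (fun q => (exists m, (m <= N)%nat /\ A m q) \/ A (S N) q) p).
    { eapply closure_mono; [| exact H]. intros q [m [Hm Hq]].
      destruct (Nat.eq_dec m (S N)) as [-> | Hne]; [now right | left].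
      exists m. split; [lia | exact Hq]. }
    destruct (closure_union _ _ _ H') as [HN | HS].
    + destruct (IH p HN) as [m [Hm Hc]]. exists m. split; [lia | exact Hc].
    + exists (S N). split; [lia | exact HS].
Qed.

Lemma closure_snd_ge (A : R * R -> Prop) (p : R * R) (c : R) :
  (forall q, A q -> c <= snd q) -> closure A p -> c <= snd p.
Proof.
  intros HA H. apply Rnot_lt_le. intros Hlt.
  destruct (H (c - snd p) ltac:(lra)) as [q [Hq [_ Hd]]].
  specialize (HA q Hq). apply Rabs_def2 in Hd. lra.
Qed.

Lemma closure_snd_lt (A : R * R -> Prop) (p : R * R) (c : R) :
  closure A p -> snd p < c -> closure (fun q => A q /\ snd q < c) p.
Proof.
  intros H Hp e He. pose proof (Rmin_l e (c - snd p)). pose proof (Rmin_r e (c - snd p)).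
  destruct (H (Rmin e (c - snd p)) ltac:(apply Rmin_pos; lra)) as [q [Hq [Hd1 Hd2]]].
  exists q. apply Rabs_def2 in Hd2 as Hd3. repeat split; [exact Hq | lra | lra | lra].
Qed.

Lemma continuity_pt_ball (f : R -> R) (a e : R) : continuity_pt f a -> 0 < e ->
  exists d, 0 < d /\ forall b, Rabs (a - b) < d -> Rabs (f a - f b) < e.
Proof.
  intros Hf He. destruct (Hf e He) as [d [Hd H]]. exists d. split; [lra|].
  intros b Hb. destruct (Req_dec b a) as [-> | Hne].
  - rewrite Rminus_diag, Rabs_R0. exact He.
  - rewrite Rabs_minus_sym. apply H. split.
    + split; [exact I | auto].
    + simpl. unfold R_dist. rewrite Rabs_minus_sym. exact Hb.
Qed.

Lemma closure_preimage (f g : R -> R) (A : R * R -> Prop) (a b : R) :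
  continuity_pt f a -> continuity_pt g b ->
  closure (fun p => A (f (fst p), g (snd p))) (a, b) -> closure A (f a, g b).
Proof.
  intros Hf Hg H e He.
  destruct (continuity_pt_ball f a e Hf He) as [d1 [Hd1 H1]].
  destruct (continuity_pt_ball g b e Hg He) as [d2 [Hd2 H2]].
  pose proof (Rmin_l d1 d2). pose proof (Rmin_r d1 d2).
  destruct (H (Rmin d1 d2) (Rmin_pos _ _ Hd1 Hd2)) as [p [Hp [Ha Hb]]]. simpl in Ha, Hb.
  exists (f (fst p), g (snd p)). simpl. split; [exact Hp|].
  split; [apply H1 | apply H2]; lra.
Qed.

Definition inS (p q : R * R) : Prop := Sset (fst p) (snd p) q.

Lemma closure_inS (A : R * R -> Prop) (x y : R) : -1 < y < 1 ->
  closure (fun p => exists q, inS p q /\ A q) (x, y) -> exists q, Sset x y q /\ closure A q.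
Proof.
  intros Hy H.
  apply (closure_mono _ (fun p => A (fst p, snd p) \/ A (- fst p, - snd p) \/
      A (fst p + 1, snd p / (1 - snd p)) \/ A (1 - fst p, - snd p / (snd p + 1)))) in H.
  2: { intros [u v] [q [Hq HA]]. simpl in *. destruct Hq as [-> | [-> | [-> | ->]]]; tauto. }
  destruct (closure_union _ _ _ H) as [H1 | H1].
  { exists (x, y). split; [now left|].
    apply (closure_preimage (fun u => u) (fun v => v)); [reg | reg | exact H1]. }
  destruct (closure_union _ _ _ H1) as [H2 | H2].
  { exists (- x, - y). split; [now right; left|].
    apply (closure_preimage Ropp Ropp); [reg | reg | exact H2]. }
  destruct (closure_union _ _ _ H2) as [H3 | H3].
  - exists (x + 1, y / (1 - y)). split; [now right; right; left|].
    apply (closure_preimage (fun u => u + 1) (fun v => v / (1 - v)));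
      [reg | reg; lra | exact H3].
  - exists (1 - x, - y / (y + 1)). split; [now right; right; right|].
    apply (closure_preimage (fun u => 1 - u) (fun v => - v / (v + 1)));
      [reg | reg; lra | exact H3].
Qed.

(** * The invariant region *)

(* Without the two corner conditions the strip would not be invariant under [calT a]. *)
Definition region (a : R) (p : R * R) : Prop :=
  a - 1 <= fst p < a /\ 1 - sqrt 2 <= snd p <= sqrt 2 /\
  (2 - sqrt 2 < snd p -> 1 - a < a * fst p) /\
  (snd p < sqrt 2 / 2 - 1 -> fst p * (2 + a) <= 1).

Lemma digit_pos (a x : R) : 0 < x < a -> a <= 1 -> 1 <= digit a x.
Proof.
  intros Hx Ha. apply (Rfloor_ge _ 1).
  assert (x * / x = 1) by (field; lra). nra.
Qed.

Section Region.

Variable a : R.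
Hypothesis Ha : 0 < a < 1.
Hypothesis golden : 1 <= a * a + a.

Lemma digit_neg (x : R) : a - 1 <= x < 0 -> digit a x <= -3.
Proof.
  intros Hx. apply (Rfloor_le _ (-3)).
  assert (x * / x = 1) by (field; lra).
  assert (/ x < 0) by (apply Rinv_lt_0_compat; lra).
  assert (1 <= (a - 1) * / x) by nra.
  nra.
Qed.

Lemma region_digit_cases (x y : R) : region a (x, y) -> x <> 0 ->
  (0 < x /\ 1 <= digit a x /\ 2 - sqrt 2 <= y + digit a x) \/
  (x < 0 /\ digit a x <= -3 /\ y + digit a x <= sqrt 2 - 3).
Proof.
  intros [Hx [Hy _]] Hx0. simpl in Hx, Hy.
  destruct (Rlt_or_le 0 x) as [Hpos | Hneg].
  - left. pose proof (digit_pos a x). lra.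
  - right. pose proof (digit_neg x). lra.
Qed.

Lemma region_init (x : R) : a - 1 <= x < a -> region a (x, 0).
Proof. intros Hx. pose proof sqrt2_bounds. unfold region; simpl. lra. Qed.

Lemma region_calT_digit1 (x y : R) : region a (x, y) -> 0 < x -> / x < 1 + a ->
  region a (/ x - 1, / (y + 1)).
Proof.
  pose proof sqrt2_sq. pose proof sqrt2_bounds.
  intros [Hx [Hy [_ Hlo]]] Hpos Hr; simpl in *.
  assert (x * / x = 1) by (field; lra).
  assert (Hy1 : sqrt 2 / 2 - 1 <= y) by (apply Rnot_lt_le; intros Hc; specialize (Hlo Hc); nra).
  assert ((y + 1) * / (y + 1) = 1) by (field; lra).
  assert (0 < / (y + 1)) by (apply Rinv_0_lt_compat; lra).
  unfold region; simpl. repeat split; intros; nra.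
Qed.

Lemma region_calT_digit_ge2 (x y : R) : region a (x, y) -> 0 < x -> 2 <= / x + 1 - a ->
  region a (/ x - digit a x, / (y + digit a x)).
Proof.
  pose proof sqrt2_sq. pose proof sqrt2_bounds.
  intros [Hx [Hy [_ Hlo]]] Hpos Hr; simpl in *.
  assert (x * / x = 1) by (field; lra).
  assert (Hd2 : 2 <= digit a x) by (apply (Rfloor_ge _ 2); lra).
  assert (Hyd : 1 + sqrt 2 / 2 <= y + digit a x).
  { destruct (Rlt_or_le y (sqrt 2 / 2 - 1)) as [Hl | Hl]; [| lra].
    specialize (Hlo Hl).
    assert (3 <= digit a x) by (apply (Rfloor_ge _ 3); nra). lra. }
  assert ((y + digit a x) * / (y + digit a x) = 1) by (field; lra).
  assert (0 < / (y + digit a x)) by (apply Rinv_0_lt_compat; lra).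
  assert (/ (y + digit a x) <= 2 - sqrt 2) by nra.
  pose proof (T_range a x).
  unfold region; simpl. repeat split; intros; lra.
Qed.

Lemma region_calT_neg (x y : R) : region a (x, y) -> x < 0 ->
  region a (/ x - digit a x, / (y + digit a x)).
Proof.
  pose proof sqrt2_sq. pose proof sqrt2_bounds.
  intros [Hx [Hy [Hhi _]]] Hneg; simpl in *.
  assert (x * / x = 1) by (field; lra).
  assert (/ x < 0) by (apply Rinv_lt_0_compat; lra).
  pose proof (digit_neg x ltac:(lra)) as Hd.
  pose proof (digit_bounds a x) as Hdb.
  assert (Hy2 : y <= 2 - sqrt 2) by (apply Rnot_lt_le; intros Hc; specialize (Hhi Hc); nra).
  assert ((y + digit a x) * / (y + digit a x) = 1) by (field; lra).
  assert (/ (y + digit a x) < 0) by (apply Rinv_lt_0_compat; lra).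
  pose proof (T_range a x).
  unfold region; simpl. repeat split; try nra.
  (* A small negative [y'] forces digit [-3]; the golden bound [a^2 + a >= 1] then
     gives exactly [x' (2 + a) <= 1]. *)
  intros Hw.
  assert (0 < (y + digit a x) * (/ (y + digit a x) - (sqrt 2 / 2 - 1))) by nra.
  assert (y + digit a x > - (2 + sqrt 2)) by nra.
  assert (-3 <= digit a x) by (apply (Rfloor_gt _ (-3)); fold (digit a x); lra).
  assert (Hd3 : digit a x = -3) by lra.
  rewrite Hd3.
  assert (1 <= (a - 1) * / x) by nra.
  nra.
Qed.

Lemma region_calT (p : R * R) : region a p -> region a (calT a p).
Proof.
  destruct p as [x y]. intros Hreg.
  destruct (Req_EM_T x 0) as [-> | Hx0].
  { rewrite calT_zero. pose proof sqrt2_bounds. unfold region; simpl. lra. }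
  rewrite calT_eq by exact Hx0.
  destruct (region_digit_cases x y Hreg Hx0) as [[Hpos [Hd _]] | [Hneg _]].
  - destruct (Rlt_or_le (/ x + 1 - a) 2) as [Hr | Hr].
    + assert (E : digit a x = 1) by (apply (Rfloor_le _ 1) in Hr; fold (digit a x) in Hr; lra).
      rewrite E. apply region_calT_digit1; auto; lra.
    + apply region_calT_digit_ge2; auto.
  - apply region_calT_neg; auto.
Qed.

Lemma img_region (n : nat) (p : R * R) : img a n p -> region a p.
Proof.
  revert p. induction n as [|n IH]; intros p Hp.
  - destruct Hp as [x [Hx <-]]. apply region_init, Hx.
  - destruct (img_succ_inv a n p Hp) as [p0 [Hp0 ->]]. apply region_calT, IH, Hp0.
Qed.

End Region.

(** * Comparing the alpha- and beta-orbits *)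

Lemma Sset_inv_same (x u a b : R) : a = x -> b = u -> Sset x (/ u) (a, / b).
Proof. intros -> ->. now left. Qed.

Lemma Sset_inv_opp (x u a b : R) : a = - x -> b = - u -> Sset x (/ u) (a, / b).
Proof. intros -> ->. right; left. now rewrite Rinv_opp. Qed.

Lemma Sset_inv_shift (x u a b : R) : u <> 0 -> u <> 1 -> a = x + 1 -> b = u - 1 ->
  Sset x (/ u) (a, / b).
Proof.
  intros Hu0 Hu1 -> ->. right; right; left. f_equal. field.
  split; [exact Hu0|]. intros E. apply Hu1. lra.
Qed.

Lemma Sset_inv_flip (x u a b : R) : u <> 0 -> u <> -1 -> a = 1 - x -> b = - u - 1 ->
  Sset x (/ u) (a, / b).
Proof.
  intros Hu0 Hu1 -> ->. right; right; right. f_equal. field.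
  repeat split; [exact Hu0 | |]; intros E; apply Hu1; lra.
Qed.

Definition next_inS (b : R) (p q : R * R) : Prop :=
  inS p (calT b q) \/ inS p (calT b (calT b q)).

Definition img_upto (a : R) (N : nat) (q : R * R) : Prop :=
  exists m, (m <= N)%nat /\ img a m q.

Definition meets (b : R) (N : nat) (p : R * R) : Prop :=
  exists q, inS p q /\ img_upto b N q.

Lemma meets_mono (b : R) (N M : nat) (p : R * R) :
  (N <= M)%nat -> meets b N p -> meets b M p.
Proof.
  intros HNM [q [Hq [m [Hm Hi]]]]. exists q. split; [exact Hq|].
  exists m. split; [lia | exact Hi].
Qed.

Lemma meets_origin (b : R) (N : nat) : 0 < b <= 1 -> meets b N (0, 0).
Proof.
  intros Hb. exists (0, 0). split; [now left|]. exists 0%nat. split; [lia | now apply img_origin].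
Qed.

Lemma meets_next (b : R) (N : nat) (p q : R * R) :
  img_upto b N q -> next_inS b p q -> meets b (S (S N)) p.
Proof.
  intros [m [Hm Hi]] [Hn | Hn].
  - exists (calT b q). split; [exact Hn|]. exists (S m). split; [lia | now apply img_succ].
  - exists (calT b (calT b q)). split; [exact Hn|]. exists (S (S m)).
    split; [lia | now apply img_succ, img_succ].
Qed.

Section Comparison.

Variables al be : R.
Hypothesis Hal : 0 < al.
Hypothesis Hab : al < be.
Hypothesis Hbe : be <= 1.
Hypothesis golden : 1 <= al * al + al.

Let sum_gt1 : 1 < al + be. Proof. nra. Qed.

Lemma digit_param_cases (x : R) :
  digit be x = digit al x \/ digit be x = digit al x - 1.
Proof.
  pose proof (digit_bounds al x). rewrite (digit_IZR al x) in *. apply Rfloor_cases. lra.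
Qed.

Lemma digit_param_opp (x : R) : x <> 0 ->
  digit be (- x) = - digit al x \/ digit be (- x) = - digit al x - 1.
Proof.
  intros Hx. pose proof (digit_bounds al x). rewrite (digit_IZR al x) in *.
  rewrite <- opp_IZR. apply Rfloor_cases. rewrite opp_IZR, Rinv_opp. lra.
Qed.

Lemma digit_param_opp_pred (x z : R) : / z = - / x - 1 ->
  digit be z = - digit al x - 1 \/ digit be z = - digit al x - 2.
Proof.
  intros Hz. pose proof (digit_bounds al x). rewrite (digit_IZR al x) in *.
  replace (- IZR (Int_part (/ x + 1 - al)) - 2)
    with (IZR (- Int_part (/ x + 1 - al) - 1) - 1) by (rewrite minus_IZR, opp_IZR; ring).
  replace (- IZR (Int_part (/ x + 1 - al)) - 1)
    with (IZR (- Int_part (/ x + 1 - al) - 1)) by (rewrite minus_IZR, opp_IZR; ring).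
  apply Rfloor_cases. rewrite Hz, minus_IZR, opp_IZR. lra.
Qed.

Lemma digit_param_pred (x z : R) : / z = / x - 1 ->
  digit be z = digit al x - 1 \/ digit be z = digit al x - 2.
Proof.
  intros Hz. pose proof (digit_bounds al x). rewrite (digit_IZR al x) in *.
  replace (IZR (Int_part (/ x + 1 - al)) - 2)
    with (IZR (Int_part (/ x + 1 - al) - 1) - 1) by (rewrite minus_IZR; ring).
  rewrite <- minus_IZR. apply Rfloor_cases. rewrite Hz, minus_IZR. lra.
Qed.

Lemma inS_calT_same (x y : R) : region al (x, y) -> x <> 0 ->
  inS (calT al (x, y)) (calT be (x, y)).
Proof.
  intros Hreg Hx0. rewrite !calT_eq by exact Hx0. unfold inS; simpl.
  pose proof sqrt2_bounds. pose proof Hreg as [Hx [Hy _]]; simpl in Hx, Hy.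
  destruct (region_digit_cases al ltac:(lra) golden x y Hreg Hx0)
    as [[Hpos [Hd Hu]] | [Hneg [Hd Hu]]];
    destruct (digit_param_cases x) as [E | E]; rewrite E;
    try (apply Sset_inv_same; ring).
  - assert (1 <= digit be x) by (apply digit_pos; lra).
    apply Sset_inv_shift; [lra | lra | ring | ring].
  - apply Sset_inv_shift; [lra | lra | ring | ring].
Qed.

Lemma inS_calT_opp (x y : R) : region al (x, y) -> x <> 0 ->
  inS (calT al (x, y)) (calT be (- x, - y)).
Proof.
  intros Hreg Hx0. rewrite !calT_eq by lra. unfold inS; simpl.
  pose proof sqrt2_bounds.
  pose proof (region_digit_cases al ltac:(lra) golden x y Hreg Hx0) as Hu.
  rewrite Rinv_opp.
  destruct (digit_param_opp x Hx0) as [E | E]; rewrite E.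
  - apply Sset_inv_opp; ring.
  - apply Sset_inv_flip; [lra | lra | ring | ring].
Qed.

(* [(/ (x + 1) - 1, 1 - y)] is the [calT be]-image of [(x + 1, y / (1 - y))] whenever
   the digit there is 1 (see [inS_calT_shift] and [calT_flip_digit2]). *)
Lemma inS_calT_shift_tail (x y : R) : region al (x, y) -> x <> 0 ->
  inS (calT al (x, y)) (calT be (/ (x + 1) - 1, 1 - y)).
Proof.
  intros Hreg Hx0. pose proof sqrt2_bounds.
  pose proof (region_digit_cases al ltac:(lra) golden x y Hreg Hx0) as Hu.
  assert (Hx1 : x + 1 <> 0) by (destruct Hreg as [Hx _]; simpl in Hx; lra).
  assert (Ez : / (x + 1) - 1 = - x / (x + 1)) by (field; exact Hx1).
  assert (Iz : / (/ (x + 1) - 1) = - / x - 1) by (rewrite Ez; field; auto).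
  assert (Hz : / (x + 1) - 1 <> 0).
  { rewrite Ez. unfold Rdiv. apply Rmult_integral_contrapositive.
    split; [lra | apply Rinv_neq_0_compat, Hx1]. }
  rewrite !calT_eq by assumption. unfold inS; simpl. rewrite Iz.
  destruct (digit_param_opp_pred x _ Iz) as [E | E]; rewrite E.
  - apply Sset_inv_opp; ring.
  - apply Sset_inv_flip; [lra | lra | ring | ring].
Qed.

Lemma inS_calT_shift (x y : R) : region al (x, y) -> x <> 0 -> be - 1 <= x + 1 < be ->
  inS (calT al (x, y)) (calT be (calT be (x + 1, y / (1 - y)))).
Proof.
  intros Hreg Hx0 Hq. pose proof sqrt2_sq. pose proof sqrt2_bounds.
  pose proof Hreg as [Hx [_ [Hhi _]]]; simpl in Hx, Hhi.
  assert (Hy : y <= 2 - sqrt 2) by (apply Rnot_lt_le; intros Hc; specialize (Hhi Hc); nra).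
  assert (D : digit be (x + 1) = 1).
  { assert ((x + 1) * / (x + 1) = 1) by (field; lra).
    apply (Rfloor_eq _ 1). split; nra. }
  rewrite (calT_eq be (x + 1)) by lra. rewrite D.
  replace (/ (y / (1 - y) + 1)) with (1 - y) by (field; lra).
  apply inS_calT_shift_tail; assumption.
Qed.

Lemma inS_calT_flip_digit1 (x y : R) : region al (x, y) -> be - 1 <= 1 - x < be ->
  digit be (1 - x) = 1 ->
  inS (calT al (x, y)) (calT be (calT be (1 - x, - y / (y + 1)))).
Proof.
  intros Hreg Hq E1. pose proof sqrt2_bounds.
  pose proof Hreg as [Hx [Hy _]]; simpl in Hx, Hy.
  pose proof (T_range be (1 - x)) as Hz. rewrite E1 in Hz.
  rewrite (calT_eq be (1 - x)) by lra. rewrite E1.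
  replace (/ (- y / (y + 1) + 1)) with (y + 1) by (field; lra).
  set (z := / (1 - x) - 1) in *.
  assert (Iz : / z = / x - 1) by (unfold z; field; lra).
  assert (Hz0 : 0 < z).
  { unfold z. replace (/ (1 - x) - 1) with (x * / (1 - x)) by (field; lra).
    apply Rmult_lt_0_compat; [| apply Rinv_0_lt_compat]; lra. }
  rewrite calT_eq by lra. rewrite (calT_eq be z) by lra. unfold inS; simpl. rewrite Iz.
  destruct (digit_param_pred x z Iz) as [E | E]; rewrite E.
  - apply Sset_inv_same; ring.
  - assert (1 <= digit be z) by (apply digit_pos; lra).
    apply Sset_inv_shift; [lra | lra | ring | ring].
Qed.

Lemma flip_digit_ge2_digit_le2 (x : R) : 0 < x < 1 -> 2 <= digit be (1 - x) ->
  digit al x <= 2.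
Proof.
  intros Hx He. pose proof (digit_bounds be (1 - x)).
  assert (x * / x = 1) by (field; lra).
  assert ((1 - x) * / (1 - x) = 1) by (field; lra).
  assert (be * / be = 1) by (field; lra).
  assert (be <= x * (1 + be)) by nra.
  assert (be * / x <= 1 + be) by nra.
  apply (Rfloor_le _ 2). nra.
Qed.

Lemma flip_snd_lower (x y : R) : region al (x, y) -> 0 < x -> digit al x <= 2 ->
  1 - 1 / sqrt 2 <= snd (calT al (x, y)).
Proof.
  intros Hreg Hx Hd. pose proof sqrt2_sq. pose proof sqrt2_bounds.
  pose proof Hreg as [Hxa [Hy _]]; simpl in Hxa, Hy.
  pose proof (digit_pos al x ltac:(lra) ltac:(lra)).
  rewrite calT_eq by lra. simpl. rewrite inv_sqrt2.
  assert ((y + digit al x) * / (y + digit al x) = 1) by (field; lra).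
  nra.
Qed.

Lemma calT_flip_digit1 (x y : R) : region al (x, y) -> 0 < x -> digit al x = 1 ->
  / x - 1 <> 0 -> calT be (1 - x, - y / (y + 1)) = calT be (calT al (x, y)).
Proof.
  intros Hreg Hx D Hx'. pose proof sqrt2_bounds.
  pose proof Hreg as [[_ Hxa] [Hy _]]; simpl in Hxa, Hy.
  assert (W : / (1 - x) = / (/ x - 1) + 1) by (field; split; lra).
  assert (E : digit be (1 - x) = digit be (/ x - 1) + 1).
  { unfold digit at 1. rewrite W.
    replace (/ (/ x - 1) + 1 + 1 - be) with (/ (/ x - 1) + 1 - be + 1) by ring.
    apply Rfloor_plus_1. }
  rewrite (calT_eq al x y), D by lra. rewrite (calT_eq be (/ x - 1)) by exact Hx'.
  rewrite (calT_eq be (1 - x)) by lra. rewrite E, W. f_equal; [ring | f_equal; field; lra].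
Qed.

Lemma calT_flip_digit2 (x y : R) : region al (x, y) -> 0 < x -> digit al x = 2 ->
  2 <= digit be (1 - x) ->
  calT be (1 - x, - y / (y + 1)) = (/ (/ x - 2 + 1) - 1, 1 - / (y + 2)).
Proof.
  intros Hreg Hx D He. pose proof sqrt2_bounds.
  pose proof Hreg as [[_ Hxa] [Hy _]]; simpl in Hxa, Hy.
  pose proof (T_range al x) as Hx'. rewrite D in Hx'.
  assert (W : / (1 - x) = / (/ x - 2 + 1) + 1) by (field; repeat split; lra).
  assert (E : digit be (1 - x) = 2).
  { apply Rle_antisym; [| exact He]. apply (Rfloor_le _ 2). rewrite W.
    assert ((/ x - 2 + 1) * / (/ x - 2 + 1) = 1) by (field; lra).
    nra. }
  rewrite calT_eq by lra. rewrite E, W. f_equal; [ring | field; lra].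
Qed.

Lemma inS_calT_flip_ge2 (x y : R) : region al (x, y) -> be - 1 <= 1 - x < be ->
  2 <= digit be (1 - x) -> fst (calT al (x, y)) <> 0 ->
  next_inS be (calT al (calT al (x, y))) (1 - x, - y / (y + 1)).
Proof.
  intros Hreg Hq He Hx'. pose proof Hreg as [Hx _]; simpl in Hx.
  assert (Hx0 : 0 < x) by lra.
  pose proof (flip_digit_ge2_digit_le2 x ltac:(lra) He) as Hd2.
  pose proof (digit_pos al x ltac:(lra) ltac:(lra)) as Hd1.
  pose proof (region_calT al ltac:(lra) golden _ Hreg) as Hreg'.
  rewrite calT_eq in Hx', Hreg' |- * by lra. simpl in Hx'.
  destruct (Rlt_or_le (/ x + 1 - al) 2) as [Hr | Hr].
  - assert (D : digit al x = 1) by (apply (Rfloor_le _ 1) in Hr; fold (digit al x) in Hr; lra).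
    left. rewrite (calT_flip_digit1 x y Hreg Hx0 D) by lra.
    rewrite (calT_eq al x y) by lra.
    apply inS_calT_same; assumption.
  - assert (D : digit al x = 2) by (apply (Rfloor_ge _ 2) in Hr; fold (digit al x) in Hr; lra).
    right. rewrite (calT_flip_digit2 x y Hreg Hx0 D He). rewrite D in Hreg', Hx' |- *.
    apply inS_calT_shift_tail; assumption.
Qed.

Lemma inS_step (p q : R * R) :
  region al p -> fst p <> 0 -> inS p q -> be - 1 <= fst q < be ->
  next_inS be (calT al p) q \/
  (1 - 1 / sqrt 2 <= snd (calT al p) /\
   (fst (calT al p) = 0 \/ next_inS be (calT al (calT al p)) q)).
Proof.
  destruct p as [x y]. intros Hreg Hx0 Hq Hrange. simpl in Hx0.
  destruct Hq as [-> | [-> | [-> | ->]]]; simpl in Hrange.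
  - left. left. now apply inS_calT_same.
  - left. left. now apply inS_calT_opp.
  - left. right. now apply inS_calT_shift.
  - pose proof Hreg as [Hx _]; simpl in Hx.
    pose proof (digit_pos be (1 - x) ltac:(lra) ltac:(lra)) as He.
    destruct (Rlt_or_le (/ (1 - x) + 1 - be) 2) as [Hr | Hr].
    + assert (E : digit be (1 - x) = 1).
      { apply (Rfloor_le _ 1) in Hr. fold (digit be (1 - x)) in Hr. lra. }
      left. right. now apply inS_calT_flip_digit1.
    + assert (He2 : 2 <= digit be (1 - x)) by (apply (Rfloor_ge _ 2) in Hr; exact Hr).
      right. split.
      * apply flip_snd_lower; [exact Hreg | lra |].
        apply (flip_digit_ge2_digit_le2 x ltac:(lra) He2).
      * destruct (Req_EM_T (fst (calT al (x, y))) 0) as [Z | Z]; [now left | right].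
        now apply inS_calT_flip_ge2.
Qed.

Lemma img_meets (n : nat) (p : R * R) : img al n p ->
  meets be (2 * n) p \/ (1 - 1 / sqrt 2 <= snd p /\ meets be (2 * S n) (calT al p)).
Proof.
  assert (Hb : 0 < be <= 1) by lra.
  revert p. induction n as [|n IH]; intros p Hp.
  - left. destruct Hp as [x [Hx <-]]. simpl.
    destruct (Rle_or_lt (be - 1) x) as [Hl | Hl].
    + exists (x, 0). split; [now left|].
      exists 0%nat. split; [lia|]. exists x. split; [lra | reflexivity].
    + exists (x + 1, 0). split.
      * right; right; left. simpl. f_equal. field.
      * exists 0%nat. split; [lia|]. exists (x + 1). split; [lra | reflexivity].
  - destruct (img_succ_inv al n p Hp) as [p0 [Hp0 ->]].
    destruct (IH p0 Hp0) as [[q [Hq Hup]] | [_ HM]]; [| now left].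
    destruct (Req_EM_T (fst p0) 0) as [Z | Z].
    { left. destruct p0 as [x0 y0]. simpl in Z. subst x0.
      rewrite calT_zero. now apply meets_origin. }
    assert (Hrange : be - 1 <= fst q < be).
    { destruct Hup as [m [_ Hi]]. now apply (img_fst_range be m). }
    pose proof (img_region al ltac:(lra) golden n p0 Hp0) as Hreg.
    destruct (inS_step p0 q Hreg Z Hq Hrange) as [Hn | [Hc [Z1 | Hn]]].
    + left. replace (2 * S n)%nat with (S (S (2 * n))) by lia. now apply (meets_next _ _ _ q).
    + right. split; [exact Hc|]. destruct (calT al p0) as [x1 y1]. simpl in Z1. subst x1.
      rewrite calT_zero. now apply meets_origin.
    + right. split; [exact Hc|]. apply (meets_mono _ (S (S (2 * n)))); [lia|].
      now apply (meets_next _ _ _ q).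
Qed.

End Comparison.

Lemma golden_of_ge (a : R) : (sqrt 5 - 1) / 2 <= a -> 0 < a /\ 1 <= a * a + a.
Proof.
  intros Ha. assert (sqrt 5 * sqrt 5 = 5) by (apply sqrt_sqrt; lra).
  pose proof (sqrt_pos 5). assert (2 < sqrt 5) by nra. split; nra.
Qed.

Theorem lemma4p5 (alpha beta x y : R)
  (Hga : (sqrt 5 - 1) / 2 <= alpha) (Hab : alpha < beta) (Hb1 : beta <= 1)
  (Hxy : Omega alpha (x, y)) (Hy : y < 1 - 1 / sqrt 2) :
  exists q, Sset x y q /\ Omega beta q.
Proof.
  destruct (golden_of_ge alpha Hga) as [Ha golden].
  destruct Hxy as [n Hcl].
  pose proof sqrt2_bounds. pose proof inv_sqrt2.
  assert (Hy_lower : 1 - sqrt 2 <= y).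
  { apply (closure_snd_ge (img alpha n) (x, y)); [| exact Hcl].
    intros q Hq. apply (img_region alpha ltac:(lra) golden n q Hq). }
  assert (Hmeets : closure (meets beta (2 * n)) (x, y)).
  { eapply closure_mono; [| exact (closure_snd_lt _ _ _ Hcl Hy)]. intros p [Hp Hlt].
    destruct (img_meets alpha beta Ha Hab Hb1 golden n p Hp) as [Hm | [Hc _]]; [exact Hm | lra]. }
  destruct (closure_inS _ x y ltac:(lra) Hmeets) as [q [Hq Hc]].
  destruct (closure_union_upto (img beta) (2 * n) q Hc) as [m [_ Hm]].
  exists q. split; [exact Hq | now exists m].
Qed.
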